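(* Let $\Lambda_n$ be the total length of the continuous-time critical beta-splitting tree $\mathrm{CTCS}(n)$. There exists a constant $\mu_\Lambda$ such that $\mathbb E[\Lambda_n]=\mu_\Lambda n+O(n^{0.41})$.
   Context: For $m\ge2$, $q_m(i)=\frac{m}{2h_{m-1}}\frac{1}{i(m-i)}$, $1\le i\le m-1$, with $h_{m-1}=\sum_{j=1}^{m-1}1/j$. In $\mathrm{CTCS}(n)$, starting from $[n]$, each interval of size $m\ge2$ waits an independent $\mathrm{Exp}(h_{m-1})$ time and then splits into intervals of sizes $i$ and $m-i$ with $i\sim q_m$; intervals of size $1$ are leaves. The edge above a clade of size $m\ge2$ has length equal to that waiting time, and $\Lambda_n$ is the sum of all edge lengths; equivalently $\Lambda_n\overset d=\Lambda_{L_n}+\Lambda'_{n-L_n}+\mathrm{Exp}(h_{n-1})$ with $L_n\sim q_n$ and independent parts. *)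

From Stdlib Require Import Reals Lra Lia.
Open Scope R_scope.

Definition harm (m : nat) : R :=
  match m with
  | O => 0
  | S m' => sum_f_R0 (fun j => / INR (S j)) m'
  end.

(* split distribution q_m(i) = m / (2 h_{m-1}) * 1/(i (m-i)), 1 <= i <= m-1 *)
Definition q (m i : nat) : R :=
  INR m / (2 * harm (m - 1)) / (INR i * INR (m - i)).

(* Expected total length, by (fuel-bounded) strong recursion obtained by taking
   expectations in  Lambda_n =d Lambda_{L_n} + Lambda'_{n-L_n} + Exp(h_{n-1}):
   E[Lambda_1] = 0 and, for n >= 2,
   E[Lambda_n] = 1/h_{n-1} + sum_{i=1}^{n-1} q_n(i) (E[Lambda_i] + E[Lambda_{n-i}]).
   The fuel k only needs k >= n; we use k = n. *)
Fixpoint ELam_aux (k n : nat) : R :=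
  match k with
  | O => 0
  | S k' =>
      if (n <=? 1)%nat then 0
      else / harm (n - 1)
           + sum_f_R0 (fun j => q n (S j) * (ELam_aux k' (S j) + ELam_aux k' (n - S j)))
                      (n - 2)
  end.

Definition ELambda (n : nat) : R := ELam_aux n n.

(* With [b n = E[Lambda_n] / n], the recursion for [E[Lambda_n]] becomes, after
   symmetrising the split and using [h_(n-1) = sum_(i<n) 1/(n-i)], the balance
   identity [sum_(i=1)^(n-1) (b n - b i) / (n - i) = 1/n].  Comparing the
   identities at [n] and [n+1] shows by induction that [b] is increasing, and
   since every weight [1/(n-i)] is at least [1/n], the identity gives
   [sum_(i<n) (b n - b i) <= 1], hence [b n - b p <= 1/p] for [p <= n].  So [b]
   converges to some [mu] with [0 <= mu - b n <= 1/n], i.e.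
   [E[Lambda_n] = mu n + O(1)]. *)

From Stdlib Require Import Reals Lra Lia.
Open Scope R_scope.

Lemma sum_f_R0_rev (f : nat -> R) (N : nat) :
  sum_f_R0 f N = sum_f_R0 (fun j => f (N - j)%nat) N.
Proof.
  revert f; induction N as [|N IH]; intro f.
  - reflexivity.
  - rewrite decomp_sum by lia. simpl pred. rewrite (IH (fun i => f (S i))).
    rewrite tech5. replace (S N - S N)%nat with 0%nat by lia.
    rewrite Rplus_comm. f_equal. apply sum_eq. intros i Hi. f_equal. lia.
Qed.

Lemma sum_f_R0_le_prefix (g : nat -> R) (k m : nat) :
  (forall j, (j <= m)%nat -> 0 <= g j) -> (k <= m)%nat ->
  sum_f_R0 g k <= sum_f_R0 g m.
Proof.
  induction m as [|m IH]; intros Hg Hkm.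
  - replace k with 0%nat by lia. lra.
  - destruct (Nat.eq_dec k (S m)) as [->|Hne]; [lra|].
    rewrite tech5. pose proof (Hg (S m) (le_n _)).
    pose proof (IH (fun j Hj => Hg j ltac:(lia)) ltac:(lia)). lra.
Qed.

(* [c/(n+1-i) <= (n-1)/n * c/(n-i)] for [1 <= i < n], with [x = n - 2], [y = i - 1]. *)
Lemma weight_shift_le (x y c : R) : 0 <= y -> y <= x -> 0 <= c ->
  c / (x + 2 - y) <= (x + 1) / (x + 2) * (c / (x + 1 - y)).
Proof.
  intros Hy Hyx Hc.
  assert (E : (x + 1) / (x + 2) * (c / (x + 1 - y)) - c / (x + 2 - y)
     = c * y / ((x + 2) * (x + 1 - y) * (x + 2 - y))) by (field; lra).
  assert (0 <= c * y / ((x + 2) * (x + 1 - y) * (x + 2 - y))).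
  { apply Rmult_le_pos; [apply Rmult_le_pos; lra|].
    left. apply Rinv_0_lt_compat.
    apply Rmult_lt_0_compat; [apply Rmult_lt_0_compat|]; lra. }
  lra.
Qed.

Section Balanced.

Variable b : nat -> R.

(* The balance identity at [n = m + 2], indexed by [j = i - 1]. *)
Hypothesis balance : forall m : nat,
  sum_f_R0 (fun j => (b (S (S m)) - b (S j)) / INR (S m - j)) m = / INR (S (S m)).

Lemma balanced_step (m : nat) :
  (forall i, (1 <= i <= S (S m))%nat -> b i <= b (S (S m))) ->
  b (S (S m)) < b (S (S (S m))).
Proof.
  (* With [D = b (m+3) - b (m+2)] the identity at [m+3] reads [D (W + 1) + C = 1/(m+3)],
     and the identity at [m+2] bounds [C] by [(m+1)/(m+2)^2 < 1/(m+3)]. *)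
  intro Hle.
  set (D := b (S (S (S m))) - b (S (S m))).
  set (W := sum_f_R0 (fun j => / INR (S (S m) - j)) m).
  set (C := sum_f_R0 (fun j => (b (S (S m)) - b (S j)) / INR (S (S m) - j)) m).
  assert (Hnext : D * (W + 1) + C = / INR (S (S (S m)))).
  { rewrite <- (balance (S m)), tech5.
    replace (S (S m) - S m)%nat with 1%nat by lia.
    change (INR 1) with 1. rewrite Rdiv_1_r. fold D.
    assert (Hsplit : sum_f_R0 (fun j => (b (S (S (S m))) - b (S j)) / INR (S (S m) - j)) m
                     = D * W + C).
    { unfold W, C. rewrite scal_sum, <- plus_sum.
      apply sum_eq. intros j Hj. unfold D. field. apply not_0_INR. lia. }
    lra. }
  assert (HW : 0 <= W).
  { apply cond_pos_sum. intro j. destruct (Nat.le_gt_cases (S (S m)) j).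
    - replace (S (S m) - j)%nat with 0%nat by lia. simpl. rewrite Rinv_0. lra.
    - left. apply Rinv_0_lt_compat, lt_0_INR. lia. }
  assert (HC : C <= INR (S m) / INR (S (S m)) * / INR (S (S m))).
  { rewrite <- (balance m), scal_sum. apply sum_Rle. intros j Hj.
    rewrite Rmult_comm, !minus_INR, !S_INR by lia.
    replace (INR m + 1 + 1 - INR j) with (INR m + 2 - INR j) by ring.
    replace (INR m + 1 + 1) with (INR m + 2) by ring.
    apply weight_shift_le; [apply pos_INR | apply le_INR; lia |].
    assert (b (S j) <= b (S (S m))) by (apply Hle; lia). lra. }
  assert (Hgap : INR (S m) / INR (S (S m)) * / INR (S (S m)) < / INR (S (S (S m)))).
  { rewrite !S_INR. pose proof (pos_INR m).
    apply Rlt_0_minus.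
    replace (/ (INR m + 1 + 1 + 1) - (INR m + 1) / (INR m + 1 + 1) * / (INR m + 1 + 1))
      with (/ ((INR m + 3) * (INR m + 2) * (INR m + 2))) by (field; lra).
    apply Rinv_0_lt_compat. apply Rmult_lt_0_compat; [apply Rmult_lt_0_compat|]; lra. }
  assert (0 < D) by nra.
  unfold D in *. lra.
Qed.

Lemma balanced_le_last (m : nat) :
  forall i, (1 <= i <= S (S m))%nat -> b i <= b (S (S m)).
Proof.
  induction m as [|m IH]; intros i Hi.
  - pose proof (balance 0) as E. simpl sum_f_R0 in E.
    change (INR (1 - 0)) with 1 in E. rewrite Rdiv_1_r in E.
    assert (0 < / INR 2) by (apply Rinv_0_lt_compat, lt_0_INR; lia).
    destruct (Nat.eq_dec i 2) as [->|]; [lra|].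
    replace i with 1%nat by lia. lra.
  - destruct (Nat.eq_dec i (S (S (S m)))) as [->|]; [lra|].
    pose proof (balanced_step m IH). pose proof (IH i ltac:(lia)). lra.
Qed.

Lemma balanced_mono (i j : nat) : (1 <= i <= j)%nat -> b i <= b j.
Proof.
  intro Hij. destruct j as [|[|j]]; [lia | replace i with 1%nat by lia; lra |].
  apply balanced_le_last. lia.
Qed.

(* Each weight [1/(m+1-j)] is at least [1/(m+2)]. *)
Lemma balanced_sum_gaps_le_1 (m : nat) :
  sum_f_R0 (fun j => b (S (S m)) - b (S j)) m <= 1.
Proof.
  assert (HN : 0 < INR (S (S m))) by (apply lt_0_INR; lia).
  apply (Rmult_le_reg_r (/ INR (S (S m)))); [apply Rinv_0_lt_compat; lra|].
  rewrite Rmult_1_l. rewrite <- (balance m) at 2. rewrite Rmult_comm, scal_sum.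
  apply sum_Rle. intros j Hj. unfold Rdiv. apply Rmult_le_compat_l.
  - pose proof (balanced_mono (S j) (S (S m)) ltac:(lia)). lra.
  - apply Rinv_le_contravar; [apply lt_0_INR; lia | apply le_INR; lia].
Qed.

Lemma balanced_tail (p n : nat) : (1 <= p <= n)%nat -> b n - b p <= / INR p.
Proof.
  intro Hp.
  assert (HP : 0 < INR p) by (apply lt_0_INR; lia).
  destruct (Nat.eq_dec p n) as [->|Hne].
  { pose proof (Rinv_0_lt_compat _ HP). lra. }
  destruct n as [|[|m]]; [lia | lia |].
  destruct p as [|p]; [lia|].
  set (g := fun j => b (S (S m)) - b (S j)).
  assert (Hg : forall j, (j <= m)%nat -> 0 <= g j).
  { intros j Hj. unfold g.
    pose proof (balanced_mono (S j) (S (S m)) ltac:(lia)). lra. }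
  assert (Hprefix : sum_f_R0 (fun _ => b (S (S m)) - b (S p)) p <= sum_f_R0 g p).
  { apply sum_Rle. intros j Hj. unfold g.
    pose proof (balanced_mono (S j) (S p) ltac:(lia)). lra. }
  rewrite sum_cte in Hprefix.
  pose proof (sum_f_R0_le_prefix g p m Hg ltac:(lia)).
  pose proof (balanced_sum_gaps_le_1 m) as Hgaps. fold g in Hgaps.
  apply (Rmult_le_reg_r (INR (S p))); [lra|].
  rewrite Rinv_l by lra. lra.
Qed.

Lemma balanced_limit :
  exists mu : R, forall n : nat, (1 <= n)%nat -> b n <= mu <= b n + / INR n.
Proof.
  set (E := fun x => exists n, (1 <= n)%nat /\ x = b n).
  assert (Hbound : bound E).
  { exists (b 1 + 1). intros x [n [Hn ->]].
    pose proof (balanced_tail 1 n ltac:(lia)) as Ht.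
    change (INR 1) with 1 in Ht. rewrite Rinv_1 in Ht. lra. }
  assert (Hinhab : exists x, E x) by (exists (b 1), 1%nat; split; [lia | reflexivity]).
  destruct (completeness E Hbound Hinhab) as [mu [Hub Hlub]].
  exists mu. intros n Hn. split.
  - apply Hub. exists n. split; [lia | reflexivity].
  - apply Hlub. intros x [k [Hk ->]].
    assert (0 < / INR n) by (apply Rinv_0_lt_compat, lt_0_INR; lia).
    destruct (Nat.le_gt_cases k n).
    + pose proof (balanced_mono k n ltac:(lia)). lra.
    + pose proof (balanced_tail n k ltac:(lia)). lra.
Qed.

End Balanced.

Lemma ELam_aux_fuel (k k' n : nat) :
  (n <= k)%nat -> (n <= k')%nat -> ELam_aux k n = ELam_aux k' n.
Proof.
  revert k' n; induction k as [|k IH]; intros k' n Hk Hk'.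
  - replace n with 0%nat by lia. destruct k'; reflexivity.
  - destruct k' as [|k'].
    + replace n with 0%nat by lia. reflexivity.
    + simpl. destruct (n <=? 1)%nat eqn:Hn; [reflexivity|].
      apply Nat.leb_gt in Hn. f_equal. apply sum_eq. intros j Hj.
      f_equal. f_equal; apply IH; lia.
Qed.

Lemma ELambda_rec (m : nat) :
  ELambda (S (S m)) = / harm (S m) +
    sum_f_R0 (fun j => q (S (S m)) (S j) * (ELambda (S j) + ELambda (S m - j))) m.
Proof.
  unfold ELambda at 1.
  change (ELam_aux (S (S m)) (S (S m))) with
   (/ harm (S (S m) - 1) + sum_f_R0 (fun j => q (S (S m)) (S j) *
      (ELam_aux (S m) (S j) + ELam_aux (S m) (S (S m) - S j))) (S (S m) - 2)).
  replace (S (S m) - 1)%nat with (S m) by lia.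
  replace (S (S m) - 2)%nat with m by lia.
  f_equal. apply sum_eq. intros j Hj. f_equal.
  unfold ELambda. f_equal; apply ELam_aux_fuel; lia.
Qed.

Lemma harm_pos (m : nat) : 0 < harm (S m).
Proof.
  induction m as [|m IH].
  - simpl. lra.
  - unfold harm in *. rewrite tech5.
    pose proof (Rinv_0_lt_compat _ (lt_0_INR (S (S m)) ltac:(lia))). lra.
Qed.

Lemma harm_S_rev (m : nat) : harm (S m) = sum_f_R0 (fun j => / INR (S m - j)) m.
Proof.
  unfold harm. rewrite sum_f_R0_rev. apply sum_eq.
  intros j Hj. f_equal. f_equal. lia.
Qed.

Definition ELambda_ratio (n : nat) : R := ELambda n / INR n.

Lemma ELambda_ratio_spec (n : nat) : (1 <= n)%nat -> ELambda n = INR n * ELambda_ratio n.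
Proof. intro Hn. unfold ELambda_ratio. field. apply not_0_INR. lia. Qed.

(* Symmetrising the split [i <-> n - i]. *)
Lemma ELambda_rec_ratio (m : nat) :
  ELambda (S (S m)) = / harm (S m) + INR (S (S m)) / harm (S m) *
    sum_f_R0 (fun j => ELambda_ratio (S j) / INR (S m - j)) m.
Proof.
  set (N := INR (S (S m))). set (H := harm (S m)).
  assert (HH : 0 < H) by apply harm_pos.
  set (f := fun j => ELambda_ratio (S j) / INR (S m - j)).
  set (g := fun j => ELambda_ratio (S m - j) / INR (S j)).
  assert (Hfg : sum_f_R0 g m = sum_f_R0 f m).
  { rewrite (sum_f_R0_rev f). apply sum_eq. intros j Hj. unfold f, g.
    replace (S (m - j)) with (S m - j)%nat by lia.
    replace (S m - (m - j))%nat with (S j) by lia. reflexivity. }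
  rewrite ELambda_rec. fold H. f_equal.
  transitivity (sum_f_R0 (fun j => (f j + g j) * (N / (2 * H))) m).
  - apply sum_eq. intros j Hj. unfold q, f, g.
    replace (S (S m) - 1)%nat with (S m) by lia.
    replace (S (S m) - S j)%nat with (S m - j)%nat by lia.
    fold H N.
    rewrite (ELambda_ratio_spec (S j)), (ELambda_ratio_spec (S m - j)) by lia.
    assert (0 < INR (S m - j)) by (apply lt_0_INR; lia).
    pose proof (lt_0_INR (S j) ltac:(lia)).
    field. lra.
  - rewrite <- scal_sum, plus_sum, Hfg. field. lra.
Qed.

Lemma ELambda_balance (m : nat) :
  sum_f_R0 (fun j => (ELambda_ratio (S (S m)) - ELambda_ratio (S j)) / INR (S m - j)) m
  = / INR (S (S m)).
Proof.
  set (N := INR (S (S m))). set (H := harm (S m)).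
  set (F := sum_f_R0 (fun j => ELambda_ratio (S j) / INR (S m - j)) m).
  assert (HN : 0 < N) by (apply lt_0_INR; lia).
  assert (HH : 0 < H) by apply harm_pos.
  assert (Hrec : N * ELambda_ratio (S (S m)) = / H + N / H * F).
  { unfold N. rewrite <- ELambda_ratio_spec by lia. apply ELambda_rec_ratio. }
  assert (Hsplit : sum_f_R0 (fun j => (ELambda_ratio (S (S m)) - ELambda_ratio (S j))
                                      / INR (S m - j)) m
                   = ELambda_ratio (S (S m)) * H - F).
  { unfold F, H. rewrite harm_S_rev, scal_sum, <- minus_sum.
    apply sum_eq. intros j Hj. unfold Rdiv. ring. }
  rewrite Hsplit.
  replace (ELambda_ratio (S (S m))) with ((/ H + N / H * F) / N) by (rewrite <- Hrec; field; lra).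
  field. lra.
Qed.

Lemma ELambda_linear_O1 :
  exists mu : R, forall n : nat, (1 <= n)%nat -> Rabs (ELambda n - mu * INR n) <= 1.
Proof.
  destruct (balanced_limit ELambda_ratio ELambda_balance) as [mu Hmu].
  exists mu. intros n Hn.
  destruct (Hmu n Hn) as [Hlo Hhi].
  assert (HP : 0 < INR n) by (apply lt_0_INR; lia).
  rewrite (ELambda_ratio_spec n Hn).
  replace (INR n * ELambda_ratio n - mu * INR n)
    with (- (INR n * (mu - ELambda_ratio n))) by ring.
  rewrite Rabs_Ropp, Rabs_right by (apply Rle_ge, Rmult_le_pos; lra).
  replace 1 with (INR n * / INR n) by (field; lra).
  apply Rmult_le_compat_l; lra.
Qed.

Theorem lemma5p1 :
  exists mu C : R, exists N : nat,
    forall n : nat, (N <= n)%nat ->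
      Rabs (ELambda n - mu * INR n) <= C * Rpower (INR n) 0.41.
Proof.
  destruct ELambda_linear_O1 as [mu Hmu].
  exists mu, 1, 1%nat. intros n Hn.
  assert (H1n : 1 <= INR n) by (apply (le_INR 1); lia).
  assert (Hpow : 1 <= Rpower (INR n) 0.41).
  { rewrite <- (Rpower_O (INR n)) by lra. apply Rle_Rpower; lra. }
  pose proof (Hmu n Hn). lra.
Qed.
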